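(* Let $A,B\in\{0,1\}^{m\times n}$ be such that $(A,B)$ is sorted-flushed. Then $cs(A)=cs(\bar B)$ if and only if $PC(A,B)$.
   Context: For $M\in\{0,1\}^{m\times n}$: $\bar M_{ij}=1-M_{ij}$; $cs(M)=(\sum_i M_{ij})_{j=1..n}$; $ars(M)=(i+\sum_j M_{ij})_{i=1..m}$; $acs(M)=(j+\sum_i M_{ij})_{j=1..n}$. $PC(A,B)$ means $\{acs(A)_1,\dots,acs(A)_n,ars(B)_1,\dots,ars(B)_m\}=\{1,\dots,m+n\}$. $M$ is bottom-left flushed if whenever $M_{ij}=1$, also $M_{i'j'}=1$ for all $i'\ge i$, $j'\le j$. The pair $(A,B)$ is sorted if $acs(A)$ and $ars(B)$ are both strictly increasing sequences; flushed if $B$ is bottom-left flushed; sorted-flushed if both. *)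

(* 0/1 matrices are 'M[bool]_(m,n); an entry counts as 1 iff it is true.
   Paper indices 1..m / 1..n correspond to ordinals 0..m-1 / 0..n-1, so the
   paper index of i : 'I_m is i.+1. *)
From mathcomp Require Import all_boot all_order all_algebra.
Set Implicit Arguments. Unset Strict Implicit. Unset Printing Implicit Defensive.

Definition mxbar m n (M : 'M[bool]_(m, n)) : 'M[bool]_(m, n) :=
  \matrix_(i, j) ~~ M i j.

Definition cs m n (M : 'M[bool]_(m, n)) : {ffun 'I_n -> nat} :=
  [ffun j => \sum_(i < m) (M i j : nat)].

Definition ars m n (M : 'M[bool]_(m, n)) (i : 'I_m) : nat :=
  i.+1 + \sum_(j < n) (M i j : nat).

Definition acs m n (M : 'M[bool]_(m, n)) (j : 'I_n) : nat :=
  j.+1 + \sum_(i < m) (M i j : nat).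

Definition PC m n (A B : 'M[bool]_(m, n)) : Prop :=
  [seq acs A j | j <- enum 'I_n] ++ [seq ars B i | i <- enum 'I_m]
    =i iota 1 (m + n).

Definition bottom_left_flushed m n (M : 'M[bool]_(m, n)) : Prop :=
  forall (i i' : 'I_m) (j j' : 'I_n),
    M i j -> (i <= i')%N -> (j' <= j)%N -> M i' j'.

Definition sorted_pair m n (A B : 'M[bool]_(m, n)) : Prop :=
  (forall j1 j2 : 'I_n, (j1 < j2)%N -> (acs A j1 < acs A j2)%N) /\
  (forall i1 i2 : 'I_m, (i1 < i2)%N -> (ars B i1 < ars B i2)%N).

Definition flushed_pair m n (A B : 'M[bool]_(m, n)) : Prop :=
  bottom_left_flushed B.

Definition sorted_flushed m n (A B : 'M[bool]_(m, n)) : Prop :=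
  sorted_pair A B /\ flushed_pair A B.

(* Let T_j := acs(Bbar)_j = j + cs(Bbar)_j.  When B is bottom-left flushed, T is
   strictly increasing and never meets a value ars(B)_i: if B_ij = 1 the flush makes
   row i long and column j of Bbar short, putting ars(B)_i above T_j, and if B_ij = 0
   the inequalities reverse.  Since all these m + n values lie in {1,...,m+n}, this
   gives PC(Bbar, B).  Hence PC(A,B) holds iff acs(A) is the sorted complement of
   ars(B) in {1,...,m+n}, i.e. iff acs(A) = acs(Bbar), i.e. iff cs(A) = cs(Bbar). *)
From mathcomp Require Import all_boot all_order all_algebra.
From mathcomp Require Import zify.

Set Implicit Arguments.
Unset Strict Implicit.
Unset Printing Implicit Defensive.

Lemma sum_ord_ltn n k : \sum_(j < n) ((j < k)%N : nat) = minn k n.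
Proof.
elim: n => [|n IHn]; first by rewrite big_ord0 minn0.
by rewrite big_ord_recr /= IHn; case: ltnP => lt_nk; lia.
Qed.

Lemma sum_bool_ge n (F : 'I_n -> bool) k : (k < n)%N ->
  (forall j : 'I_n, (j <= k)%N -> F j) -> (k.+1 <= \sum_(j < n) (F j : nat))%N.
Proof.
move=> lt_kn FT; apply: (@leq_trans (\sum_(j < n) ((j < k.+1)%N : nat))).
  by rewrite sum_ord_ltn; lia.
by apply: leq_sum => j _; case: ltnP => //= le_jk; rewrite FT.
Qed.

Lemma sum_bool_le n (F : 'I_n -> bool) k :
  (forall j : 'I_n, (k <= j)%N -> ~~ F j) -> (\sum_(j < n) (F j : nat) <= k)%N.
Proof.
move=> FF; apply: (@leq_trans (\sum_(j < n) ((j < k)%N : nat))).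
  apply: leq_sum => j _; case: ltnP => [_ | le_kj]; first by case: (F j).
  by rewrite (negbTE (FF _ le_kj)).
by rewrite sum_ord_ltn geq_minl.
Qed.

Lemma sum_bool_ord_le n (F : 'I_n -> bool) : (\sum_(j < n) (F j : nat) <= n)%N.
Proof. by apply: sum_bool_le => j; rewrite leqNgt ltn_ord. Qed.

Lemma sorted_map_enum_ord n (f : 'I_n -> nat) :
  (forall a b : 'I_n, (a < b)%N -> (f a < f b)%N) ->
  sorted ltn [seq f j | j <- enum 'I_n].
Proof.
move=> f_inc; rewrite sorted_map.
apply: (@sub_sorted _ (relpre val ltn)) => [a b /f_inc //|].
by rewrite -sorted_map val_enum_ord iota_ltn_sorted.
Qed.

Lemma sorted_cat_complement_eq (T : eqType) (leT : rel T) (s u t p : seq T) :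
  transitive leT -> irreflexive leT -> uniq p ->
  sorted leT s -> sorted leT u ->
  size (s ++ t) = size p -> size (u ++ t) = size p ->
  s ++ t =i p -> u ++ t =i p -> s = u.
Proof.
move=> leT_tr leT_irr p_uniq s_sorted u_sorted sz_s sz_u st_p ut_p.
have perm_p (v : seq T) : size (v ++ t) = size p -> v ++ t =i p -> perm_eq (v ++ t) p.
  move=> sz_v vt_p; apply: uniq_perm => //.
  by apply: (leq_size_uniq p_uniq) => [x|]; rewrite ?vt_p ?sz_v.
have su : perm_eq s u.
  by rewrite -(perm_cat2r t) (perm_trans (perm_p s sz_s st_p)) // perm_sym perm_p.
exact: (irr_sorted_eq leT_tr leT_irr s_sorted u_sorted (perm_mem su)).
Qed.

Lemma acs_cs m n (M : 'M[bool]_(m, n)) j : acs M j = j.+1 + cs M j.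
Proof. by rewrite /cs ffunE. Qed.

Lemma acs_le m n (M : 'M[bool]_(m, n)) j : (acs M j <= m + n)%N.
Proof.
have : (\sum_(i < m) (M i j : nat) <= m)%N by apply: sum_bool_ord_le.
by have := ltn_ord j; rewrite /acs; lia.
Qed.

Lemma ars_le m n (M : 'M[bool]_(m, n)) i : (ars M i <= m + n)%N.
Proof.
have : (\sum_(j < n) (M i j : nat) <= n)%N by apply: sum_bool_ord_le.
by have := ltn_ord i; rewrite /ars; lia.
Qed.

Section Flushed.

Variables (m n : nat) (B : 'M[bool]_(m, n)).
Hypothesis B_flushed : bottom_left_flushed B.

Lemma cs_mxbar_homo (j1 j2 : 'I_n) :
  (j1 <= j2)%N -> (cs (mxbar B) j1 <= cs (mxbar B) j2)%N.
Proof.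
move=> le_j; rewrite /cs !ffunE; apply: leq_sum => i _; rewrite !mxE.
by case B2: (B i j2); rewrite ?(B_flushed B2 (leqnn i) le_j) //; case: (B i j1).
Qed.

Lemma acs_mxbar_inc (j1 j2 : 'I_n) :
  (j1 < j2)%N -> (acs (mxbar B) j1 < acs (mxbar B) j2)%N.
Proof. by move=> lt_j; have := cs_mxbar_homo (ltnW lt_j); rewrite !acs_cs; lia. Qed.

Lemma acs_mxbar_neq_ars i j : acs (mxbar B) j != ars B i.
Proof.
have cs_mxbarE : cs (mxbar B) j = \sum_(i' < m) (~~ B i' j : nat).
  by rewrite /cs ffunE; apply: eq_bigr => i' _; rewrite mxE.
rewrite acs_cs cs_mxbarE /ars; case Bij: (B i j).
- have row_long : (j.+1 <= \sum_(j' < n) (B i j' : nat))%N.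
    by apply: sum_bool_ge => // j' le_j'; apply: B_flushed Bij _ le_j'.
  have col_short : (\sum_(i' < m) (~~ B i' j : nat) <= i)%N.
    by apply: sum_bool_le => i' le_i'; rewrite (B_flushed Bij le_i' (leqnn j)).
  by apply/eqP; lia.
- have row_short : (\sum_(j' < n) (B i j' : nat) <= j)%N.
    apply: sum_bool_le => j' le_j'; apply/negP => Bij'.
    by rewrite (B_flushed Bij' (leqnn i) le_j') in Bij.
  have col_long : (i.+1 <= \sum_(i' < m) (~~ B i' j : nat))%N.
    apply: sum_bool_ge => // i' le_i'; apply/negP => Bi'j.
    by rewrite (B_flushed Bi'j le_i' (leqnn j)) in Bij.
  by apply/eqP; lia.
Qed.

Lemma row_sum_homo (i1 i2 : 'I_m) :
  (i1 <= i2)%N -> (\sum_(j < n) (B i1 j : nat) <= \sum_(j < n) (B i2 j : nat))%N.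
Proof.
move=> le_i; apply: leq_sum => j _.
by case B1: (B i1 j); rewrite ?(B_flushed B1 le_i (leqnn j)).
Qed.

Lemma ars_inc (i1 i2 : 'I_m) : (i1 < i2)%N -> (ars B i1 < ars B i2)%N.
Proof. by move=> lt_i; have := row_sum_homo (ltnW lt_i); rewrite /ars; lia. Qed.

Lemma PC_mxbar : PC (mxbar B) B.
Proof.
set s := [seq acs (mxbar B) j | j <- enum 'I_n].
set t := [seq ars B i | i <- enum 'I_m].
have s_uniq : uniq s.
  by apply: (sorted_uniq ltn_trans ltnn); apply: sorted_map_enum_ord acs_mxbar_inc.
have t_uniq : uniq t.
  by apply: (sorted_uniq ltn_trans ltnn); apply: sorted_map_enum_ord ars_inc.
have st_uniq : uniq (s ++ t).
  rewrite cat_uniq s_uniq t_uniq andbT.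
  apply/hasPn => _ /mapP [i _ ->]; apply/mapP => -[j _ /eqP].
  by rewrite eq_sym (negbTE (acs_mxbar_neq_ars i j)).
have st_sub : {subset s ++ t <= iota 1 (m + n)}.
  move=> x; rewrite mem_cat mem_iota => /orP[] /mapP [k _ ->].
  - by have := acs_le (mxbar B) k; rewrite /acs; lia.
  - by have := ars_le B k; rewrite /ars; lia.
apply: (uniq_min_size st_uniq st_sub _).2.
by rewrite size_iota size_cat !size_map -?enumT !size_enum_ord addnC.
Qed.

End Flushed.

Theorem mainTheorem5 (m n : nat) (A B : 'M[bool]_(m, n)) :
  sorted_flushed A B -> (cs A = cs (mxbar B) <-> PC A B).
Proof.
(* The monotonicity of ars(B) in the hypothesis is already forced by the flush (ars_inc). *)
move=> [[A_inc _] B_flushed]; have PC_B := PC_mxbar B_flushed.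
have acs_eq : cs A = cs (mxbar B) -> acs A =1 acs (mxbar B).
  by move=> cs_eq j; rewrite !acs_cs cs_eq.
split=> [cs_eq | PC_A].
- by rewrite /PC (eq_map (acs_eq cs_eq)).
- have acs_seq_eq : [seq acs A j | j <- enum 'I_n] = [seq acs (mxbar B) j | j <- enum 'I_n].
    apply: (sorted_cat_complement_eq ltn_trans ltnn (iota_uniq 1 (m + n))) PC_A PC_B;
      rewrite ?size_cat ?size_map -?enumT ?size_enum_ord ?size_iota 1?addnC //.
    - exact: sorted_map_enum_ord.
    - exact: sorted_map_enum_ord (acs_mxbar_inc B_flushed).
  apply/ffunP => j; apply/(@addnI j.+1); rewrite -!acs_cs.
  by move/eq_in_map: acs_seq_eq; apply; rewrite mem_enum.
Qed.
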